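(* Let $A\subseteq\mathbb{R}$ be a nonempty homogeneous suborder and let $X\subseteq\mathbb{R}$ be finite. Then $A\cup X$ is order-isomorphic to $A$.
   Context: A suborder $A\subseteq\mathbb{R}$ is homogeneous if $A\cong A\cap I$ (order-isomorphism) for every open interval $I=(a,b)$ with $-\infty\le a<b\le\infty$. *)

(* Suborders of R are subsets R -> Prop,
   ordered by the restriction of the usual order of R. *)
From Stdlib Require Import Reals List.
From Coquelicot Require Import Rbar.
Open Scope R_scope.

Definition order_iso (A B : R -> Prop) : Prop :=
  exists f : R -> R,
    (forall x, A x -> B (f x)) /\
    (forall x y, A x -> A y -> x < y -> f x < f y) /\
    (forall y, B y -> exists x, A x /\ f x = y).

Definition open_interval (a b : Rbar) : R -> Prop :=
  fun x => Rbar_lt a (Finite x) /\ Rbar_lt (Finite x) b.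

Definition set_inter (A B : R -> Prop) : R -> Prop := fun x => A x /\ B x.
Definition set_union (A B : R -> Prop) : R -> Prop := fun x => A x \/ B x.

Definition homogeneous (A : R -> Prop) : Prop :=
  forall a b : Rbar, Rbar_lt a b -> order_iso A (set_inter A (open_interval a b)).

Definition finite_set (X : R -> Prop) : Prop :=
  exists l : list R, forall x, X x <-> In x l.

From Pilot Require Import Defs.
From Stdlib Require Import Reals List Lra Classical ClassicalEpsilon.
From Coquelicot Require Import Rbar.
Open Scope R_scope.

(* Write [piece S a b] for S ∩ (a,b).  We show, by induction on a
   list l, that for every interval (a,b) the piece of A ∪ l over (a,b) is
   isomorphic to the piece of A over (a,b); the theorem is the case
   (a,b) = (-oo,+oo).  If the new point x of the list lies outside (a,b) it
   changes nothing.  Otherwise x cuts (a,b) into (a,x) and (x,b); homogeneity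
   provides a point c of A inside (a,b) (the image of any point of A under
   A ≅ A ∩ (a,b)), and, again by homogeneity, all nonempty pieces of A are
   isomorphic to one another.  By induction the two sides of x are isomorphic
   to A ∩ (a,c) and A ∩ (c,b), and gluing the two isomorphisms together,
   sending x to c, gives the result. *)

Lemma iso_ext (S T S' T' : R -> Prop) :
  order_iso S T -> (forall z, S z <-> S' z) -> (forall z, T z <-> T' z) ->
  order_iso S' T'.
Proof.
  intros [f [Hmaps [Hmono Hsurj]]] HS HT. exists f; repeat split.
  - intros x Hx. apply HT, Hmaps, HS, Hx.
  - intros x y Hx Hy. apply Hmono; apply HS; assumption.
  - intros y Hy. destruct (Hsurj y (proj2 (HT y) Hy)) as [x [Hx Hfx]].
    exists x; split; [apply HS|]; assumption.
Qed.

Lemma iso_refl (S : R -> Prop) : order_iso S S.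
Proof.
  exists (fun z => z); repeat split; auto.
  intros y Hy; exists y; auto.
Qed.

Lemma iso_trans (S T U : R -> Prop) :
  order_iso S T -> order_iso T U -> order_iso S U.
Proof.
  intros [f [F1 [F2 F3]]] [g [G1 [G2 G3]]].
  exists (fun x => g (f x)); repeat split; auto.
  intros y Hy. destruct (G3 y Hy) as [z [Hz <-]].
  destruct (F3 z Hz) as [x [Hx <-]]. exists x; auto.
Qed.

Lemma strict_mono_inj (S : R -> Prop) (f : R -> R) :
  (forall x y, S x -> S y -> x < y -> f x < f y) ->
  forall x y, S x -> S y -> f x = f y -> x = y.
Proof.
  intros Hmono x y Hx Hy E.
  destruct (Rtotal_order x y) as [H|[H|H]]; auto;
    apply Hmono in H; auto; lra.
Qed.

(* The inverse is obtained by choice; it is increasing because f is. *)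
Lemma iso_sym (S T : R -> Prop) : order_iso S T -> order_iso T S.
Proof.
  intros [f [F1 [F2 F3]]].
  set (g := fun y => epsilon (inhabits 0) (fun x => S x /\ f x = y)).
  assert (Hg : forall y, T y -> S (g y) /\ f (g y) = y).
  { intros y Hy. apply (epsilon_spec (inhabits 0) (fun x => S x /\ f x = y)).
    apply F3; assumption. }
  exists g; repeat split.
  - intros y Hy. apply Hg; assumption.
  - intros x y Hx Hy Hxy. destruct (Hg x Hx) as [Sx Ex]. destruct (Hg y Hy) as [Sy Ey].
    destruct (Rtotal_order (g x) (g y)) as [H|[H|H]]; auto.
    + rewrite <- Ex, <- Ey, H in Hxy. lra.
    + apply F2 in H; auto. lra.
  - intros x Hx. exists (f x). split; auto.
    destruct (Hg (f x) (F1 x Hx)) as [Sg Eg].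
    apply (strict_mono_inj S f F2); assumption.
Qed.

Definition split_at (S S1 : R -> Prop) (x : R) (S2 : R -> Prop) : Prop :=
  (forall z, S z <-> S1 z \/ z = x \/ S2 z) /\
  (forall z, S1 z -> z < x) /\ (forall z, S2 z -> x < z).

Lemma split_at_cases (S S1 S2 : R -> Prop) (x z : R) :
  split_at S S1 x S2 -> S z -> (S1 z /\ z < x) \/ z = x \/ (S2 z /\ x < z).
Proof.
  intros [HS [H1 H2]] Hz. apply HS in Hz.
  destruct Hz as [Hz|[Hz|Hz]]; [left | right; left | right; right]; auto.
Qed.

Definition glue_map (f g : R -> R) (x c z : R) : R :=
  if Rlt_dec z x then f z else if Rlt_dec x z then g z else c.

Lemma glue_map_below f g x c z : z < x -> glue_map f g x c z = f z.
Proof. intros H. unfold glue_map. destruct (Rlt_dec z x); [reflexivity | lra]. Qed.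

Lemma glue_map_above f g x c z : x < z -> glue_map f g x c z = g z.
Proof.
  intros H. unfold glue_map.
  destruct (Rlt_dec z x); [lra|]. destruct (Rlt_dec x z); [reflexivity | lra].
Qed.

Lemma glue_map_at f g x c : glue_map f g x c x = c.
Proof.
  unfold glue_map. destruct (Rlt_dec x x); [lra|]. destruct (Rlt_dec x x); [lra | reflexivity].
Qed.

Lemma iso_glue (S S1 S2 T T1 T2 : R -> Prop) (x c : R) :
  split_at S S1 x S2 -> split_at T T1 c T2 ->
  order_iso S1 T1 -> order_iso S2 T2 -> order_iso S T.
Proof.
  intros HS HT [f [F1 [F2 F3]]] [g [G1 [G2 G3]]].
  destruct HT as [HTeq [HT1 HT2]].
  exists (glue_map f g x c); repeat split.
  - intros z Hz. apply HTeq.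
    destruct (split_at_cases _ _ _ _ _ HS Hz) as [[Hz1 L]|[->|[Hz2 L]]].
    + left. rewrite glue_map_below; auto.
    + right; left. apply glue_map_at.
    + right; right. rewrite glue_map_above; auto.
  - intros z w Hz Hw Hzw.
    destruct (split_at_cases _ _ _ _ _ HS Hz) as [[Hz1 Lz]|[Ez|[Hz2 Lz]]];
    destruct (split_at_cases _ _ _ _ _ HS Hw) as [[Hw1 Lw]|[Ew|[Hw2 Lw]]];
    subst; try lra;
    repeat first [rewrite glue_map_below by lra | rewrite glue_map_above by lra
                 | rewrite glue_map_at];
    auto.
    (* a point below the cut is sent below c, a point above it above c *)
    specialize (HT1 _ (F1 _ Hz1)); specialize (HT2 _ (G1 _ Hw2)); lra.
  - intros y Hy. apply HTeq in Hy. destruct HS as [HSeq [HS1 HS2]].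
    destruct Hy as [Hy|[->|Hy]].
    + destruct (F3 y Hy) as [z [Hz <-]]. exists z.
      split; [apply HSeq; auto | apply glue_map_below; auto].
    + exists x. split; [apply HSeq; auto | apply glue_map_at].
    + destruct (G3 y Hy) as [z [Hz <-]]. exists z.
      split; [apply HSeq; auto | apply glue_map_above; auto].
Qed.

Definition piece (S : R -> Prop) (a b : Rbar) : R -> Prop :=
  set_inter S (Defs.open_interval a b).

(* A point x of (a,b) cuts the piece of S over (a,b) into the pieces over
   (a,x) and (x,b); S' is S with x possibly removed. *)
Lemma piece_split_at (S S' : R -> Prop) (a b : Rbar) (x : R) :
  Defs.open_interval a b x -> (forall z, S z <-> S' z \/ z = x) ->
  split_at (piece S a b) (piece S' a (Finite x)) x (piece S' (Finite x) b).
Proof.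
  intros [Hax Hxb] HS. unfold piece, set_inter, Defs.open_interval.
  split; [|split]; [|intros z [_ [_ H]]; exact H | intros z [_ [H _]]; exact H].
  intros z; rewrite HS; split.
  - intros [HSz [Haz Hzb]]. destruct (Rtotal_order z x) as [L|[L|L]]; auto.
    + left. destruct HSz as [H|H]; [auto | lra].
    + right; right. destruct HSz as [H|H]; [auto | lra].
  - intros [[H1 [H2 H3]]|[->|[H1 [H2 H3]]]]; split; auto.
    + split; auto. exact (Rbar_lt_trans (Finite z) (Finite x) b H3 Hxb).
    + split; auto. exact (Rbar_lt_trans a (Finite x) (Finite z) Hax H2).
Qed.

Section Homogeneous.

Variable A : R -> Prop.
Hypothesis A_nonempty : exists a, A a.
Hypothesis A_homogeneous : homogeneous A.

Lemma homogeneous_meets (a b : Rbar) : Rbar_lt a b -> exists c, piece A a b c.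
Proof.
  intros Hab. destruct A_nonempty as [a0 Ha0].
  destruct (A_homogeneous a b Hab) as [f [Hmaps _]].
  exists (f a0). apply Hmaps, Ha0.
Qed.

Lemma homogeneous_pieces_iso (a b a' b' : Rbar) :
  Rbar_lt a b -> Rbar_lt a' b' -> order_iso (piece A a b) (piece A a' b').
Proof.
  intros Hab Hab'. apply (iso_trans _ A).
  - apply iso_sym, A_homogeneous, Hab.
  - apply A_homogeneous, Hab'.
Qed.

Definition list_set (l : list R) : R -> Prop := fun z => In z l.

Lemma piece_add_points_iso (l : list R) (a b : Rbar) : Rbar_lt a b ->
  order_iso (piece (set_union A (list_set l)) a b) (piece A a b).
Proof.
  revert a b; induction l as [|x l IH]; intros a b Hab.
  - apply (iso_ext _ _ _ _ (iso_refl (piece A a b))); [|tauto].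
    unfold piece, set_inter, set_union, list_set; simpl; tauto.
  - destruct (classic (Defs.open_interval a b x)) as [Hx|Hx].
    + destruct (homogeneous_meets a b Hab) as [c [Hc Hcab]].
      destruct Hx as [Hax Hxb]. destruct Hcab as [Hac Hcb].
      apply (iso_glue _ (piece (set_union A (list_set l)) a (Finite x))
                        (piece (set_union A (list_set l)) (Finite x) b)
                        _ (piece A a (Finite c)) (piece A (Finite c) b) x c).
      * apply piece_split_at; [split; assumption|].
        unfold set_union, list_set; simpl; intros z.
        split; [intros [H|[<-|H]] | intros [[H|H]| ->]]; auto.
      * apply piece_split_at; [split; assumption|].
        intros z; split; [tauto | intros [H| ->]; assumption].
      * eapply iso_trans; [apply IH, Hax | apply homogeneous_pieces_iso; assumption].
      * eapply iso_trans; [apply IH, Hxb | apply homogeneous_pieces_iso; assumption].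
    + apply (iso_ext _ _ _ _ (IH a b Hab)); [|tauto].
      unfold piece, set_inter, set_union, list_set; simpl; intros z; split.
      * intros [[H|H] Hz]; auto.
      * intros [[H|[<-|H]] Hz]; auto. contradiction.
Qed.

End Homogeneous.

Theorem mainTheorem11 (A X : R -> Prop) :
  (exists a, A a) -> homogeneous A -> finite_set X ->
  order_iso (set_union A X) A.
Proof.
  intros HA Hh [l Hl].
  apply (iso_ext _ _ _ _ (piece_add_points_iso A HA Hh l m_infty p_infty I));
    unfold piece, set_inter, set_union, list_set, Defs.open_interval; simpl; intros z.
  - rewrite Hl. tauto.
  - tauto.
Qed.
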